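(* Let $t_i=i^\alpha$ for $i\ge1$ with $0<\alpha\le1/3$, and let $n(t)=\#\{k\ge1: t_k\le t\}=[t^{1/\alpha}]$ for $t\ge 0$. Let $M\ge1$ be an integer and write \[ I_M(u)=u^3\int_0^{t_M}\frac{n(t)}{t^2(t^2+u^2+ut\sqrt2)}\,dt . \] (i) There is a constant $C>0$ depending only on $\alpha$ such that if $u\ge t_M$, then $I_M(u)\ge Cu(M^{1-\alpha}-1)$. (ii) If $0<\alpha<1/3$, there is a constant $C>0$ depending only on $\alpha$ such that for $0\le u\le t_M$, \[ I_M(u)\ge C\left[\frac{u^{1/\alpha}-u}{1-\alpha}+u^3\,\frac{M^{1-3\alpha}-\max(u,1)^{1/\alpha-3}}{1-3\alpha}\right]. \] (iii) If $\alpha=1/3$, there is a constant $C>0$ such that for $0\le u\le t_M$, \[ I_M(u)\ge Cu^3\log\frac{t_M}{\max(u,1)}. \]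
   Context: $[\cdot]$ denotes the integer part. The constants do not depend on $M$ or $u$. *)

From Stdlib Require Import Reals.
From Coquelicot Require Import Coquelicot.
Open Scope R_scope.

(* Real power x^a for x >= 0, with the convention 0^a = 0 (used only with a > 0,
   or with x >= 1). Stdlib's Rpower 0 a = 1, hence the guard. *)
Definition rpow (x a : R) : R := if Rle_dec x 0 then 0 else Rpower x a.

Definition tseq (alpha : R) (i : nat) : R := rpow (INR i) alpha.

Definition ncount (alpha t : R) : R := IZR (Int_part (rpow t (1 / alpha))).

Definition IM (alpha : R) (M : nat) (u : R) : R :=
  u ^ 3 * RInt (fun t => ncount alpha t / (t ^ 2 * (t ^ 2 + u ^ 2 + u * t * sqrt 2)))
               0 (tseq alpha M).

From Stdlib Require Import Reals Lra Lia.
From Coquelicot Require Import Coquelicot.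
Open Scope R_scope.

(* The counting function vanishes below 1 and satisfies n(t) >= t^(1/alpha)/2 for t >= 1,
   while t^2 + u^2 + u t sqrt 2 <= (t + u)^2.  Hence the integrand is at least
   t^(1/alpha-2)/(8u^2) on [1, u] and at least t^(1/alpha-4)/8 on [max(u,1), t_M], and
   integrating these powers gives (i) with C = alpha/(8(1-alpha)), (ii) with C = alpha/8 and
   (iii) with C = 1/8.  For u < 1 the first term of (ii) is nonpositive, so only the range
   [1, t_M] is needed there. *)

Definition integrand (alpha u t : R) : R :=
  ncount alpha t / (t ^ 2 * (t ^ 2 + u ^ 2 + u * t * sqrt 2)).

Lemma IM_integrand alpha M u :
  IM alpha M u = u ^ 3 * RInt (integrand alpha u) 0 (tseq alpha M).
Proof. reflexivity. Qed.

Lemma rpow_Rpower x a : 0 < x -> rpow x a = Rpower x a.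
Proof. intros Hx. unfold rpow. destruct (Rle_dec x 0); lra. Qed.

Lemma Rpower_1_l a : Rpower 1 a = 1.
Proof. unfold Rpower. rewrite ln_1, Rmult_0_r. apply exp_0. Qed.

Lemma Rpower_ge1 x a : 1 <= x -> 0 <= a -> 1 <= Rpower x a.
Proof. intros. rewrite <- (Rpower_1_l a). apply Rle_Rpower_l; lra. Qed.

Lemma Rpower_minus_nat x a k : 0 < x -> Rpower x (a - INR k) = Rpower x a / x ^ k.
Proof.
  intros Hx. unfold Rminus, Rdiv.
  rewrite Rpower_plus, Rpower_Ropp, Rpower_pow by exact Hx. reflexivity.
Qed.

Lemma rpow_le_self x a : 0 <= x <= 1 -> 1 <= a -> rpow x a <= x.
Proof.
  intros Hx Ha. unfold rpow. destruct (Rle_dec x 0) as [|Hx0]; [lra|].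
  unfold Rpower. rewrite <- (exp_ln x) at 2 by lra.
  assert (ln x <= 0) by (rewrite <- ln_1; apply ln_le; lra).
  assert (Hle : a * ln x <= ln x) by nra.
  destruct (Rle_lt_or_eq_dec _ _ Hle) as [Hlt|Heq].
  - left. now apply exp_increasing.
  - rewrite Heq. lra.
Qed.

Section Tseq.

Variable alpha : R.
Hypothesis alpha_gt0 : 0 < alpha.

Lemma tseq_Rpower k : (1 <= k)%nat -> tseq alpha k = Rpower (INR k) alpha.
Proof. intros Hk. apply rpow_Rpower, (lt_INR 0); lia. Qed.

Lemma tseq_ge1 k : (1 <= k)%nat -> 1 <= tseq alpha k.
Proof.
  intros Hk. rewrite tseq_Rpower by exact Hk.
  apply Rpower_ge1; [apply (le_INR 1); exact Hk | lra].
Qed.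

Lemma tseq_0 : tseq alpha 0 = 0.
Proof. unfold tseq, rpow. simpl. destruct (Rle_dec 0 0); lra. Qed.

Lemma tseq_ge0 k : 0 <= tseq alpha k.
Proof. unfold tseq, rpow. destruct (Rle_dec (INR k) 0); [lra | left; apply exp_pos]. Qed.

Lemma tseq_le_S k : tseq alpha k <= tseq alpha (S k).
Proof.
  destruct k as [|k].
  - rewrite tseq_0. apply tseq_ge0.
  - rewrite !tseq_Rpower by lia. apply Rle_Rpower_l; [lra|].
    split; [apply (lt_INR 0); lia | apply le_INR; lia].
Qed.

Lemma Rpower_tseq k q : (1 <= k)%nat -> Rpower (tseq alpha k) q = Rpower (INR k) (alpha * q).
Proof. intros Hk. rewrite tseq_Rpower by exact Hk. apply Rpower_mult. Qed.

Lemma ncount_tseq k t : 0 < t -> tseq alpha k <= t < tseq alpha (S k) -> ncount alpha t = INR k.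
Proof.
  intros Ht [Hlo Hhi]. unfold ncount. rewrite rpow_Rpower by exact Ht.
  assert (Hinv : forall j, (1 <= j)%nat -> Rpower (tseq alpha j) (1 / alpha) = INR j).
  { intros j Hj. rewrite Rpower_tseq by exact Hj.
    replace (alpha * (1 / alpha)) with 1 by (field; lra).
    apply Rpower_1, (lt_INR 0); lia. }
  assert (Hpos : 0 < 1 / alpha) by (apply Rdiv_lt_0_compat; lra).
  rewrite INR_IZR_INZ, <- (Int_part_spec _ (Z.of_nat k)); [reflexivity|].
  rewrite <- INR_IZR_INZ. split.
  - assert (Hup : Rpower t (1 / alpha) < INR (S k)).
    { rewrite <- (Hinv (S k)) by lia. apply Rlt_Rpower_l; lra. }
    rewrite S_INR in Hup. lra.
  - destruct k as [|k].
    + left. apply exp_pos.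
    + rewrite <- (Hinv (S k)) by lia.
      pose proof (tseq_ge1 (S k) ltac:(lia)).
      apply Rle_Rpower_l; lra.
Qed.

Lemma ncount_ge0 t : 0 <= ncount alpha t.
Proof.
  unfold ncount. destruct (base_Int_part (rpow t (1 / alpha))) as [_ Hfrac].
  assert (0 <= rpow t (1 / alpha)).
  { unfold rpow. destruct (Rle_dec t 0); [lra | left; apply exp_pos]. }
  assert (Hgt : IZR (Int_part (rpow t (1 / alpha))) > -1) by lra.
  apply lt_IZR in Hgt. apply IZR_le. lia.
Qed.

Lemma ncount_ge_half t : 1 <= t -> Rpower t (1 / alpha) / 2 <= ncount alpha t.
Proof.
  intros Ht. unfold ncount. rewrite rpow_Rpower by lra.
  destruct (base_Int_part (Rpower t (1 / alpha))) as [_ Hfrac].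
  assert (1 <= Rpower t (1 / alpha)).
  { apply Rpower_ge1; [lra|]. left. apply Rdiv_lt_0_compat; lra. }
  assert (Hgt : IZR (Int_part (Rpower t (1 / alpha))) > 0) by lra.
  apply lt_IZR in Hgt.
  assert (1 <= IZR (Int_part (Rpower t (1 / alpha)))) by (apply IZR_le; lia).
  lra.
Qed.

End Tseq.

Lemma denom_pos u t : 0 <= u -> 0 < t -> 0 < t ^ 2 + u ^ 2 + u * t * sqrt 2.
Proof. intros. pose proof (sqrt_pos 2). assert (0 <= u * t) by nra. nra. Qed.

Lemma denom_le_sqr u t : 0 <= u -> 0 <= t -> t ^ 2 + u ^ 2 + u * t * sqrt 2 <= (t + u) ^ 2.
Proof.
  intros. assert (sqrt 2 <= 2).
  { pose proof (sqrt_sqrt 2 ltac:(lra)). pose proof (sqrt_pos 2). nra. }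
  assert (0 <= u * t) by nra. nra.
Qed.

Lemma ex_RInt_subinterval (f : R -> R) lo hi a b :
  lo <= a -> a <= b -> b <= hi -> ex_RInt f lo hi -> ex_RInt f a b.
Proof.
  intros. apply (ex_RInt_Chasles_2 f lo); [lra|].
  apply (ex_RInt_Chasles_1 f lo b hi); [lra|assumption].
Qed.

Lemma RInt_subinterval_le (f : R -> R) lo hi a b :
  lo <= a -> a <= b -> b <= hi -> ex_RInt f lo hi ->
  (forall t, lo <= t <= hi -> 0 <= f t) -> RInt f a b <= RInt f lo hi.
Proof.
  intros Hla Hab Hbh Hf Hpos.
  assert (Hex : forall c d, lo <= c -> c <= d -> d <= hi -> ex_RInt f c d)
    by (intros; eapply ex_RInt_subinterval; eauto).
  rewrite <- (RInt_Chasles f lo a hi), <- (RInt_Chasles f a b hi) by (apply Hex; lra).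
  assert (0 <= RInt f lo a) by (apply RInt_ge_0; [lra | apply Hex; lra | intros; apply Hpos; lra]).
  assert (0 <= RInt f b hi) by (apply RInt_ge_0; [lra | apply Hex; lra | intros; apply Hpos; lra]).
  unfold plus; simpl. lra.
Qed.

Lemma is_RInt_le_RInt (f g : R -> R) a b l :
  a <= b -> ex_RInt f a b -> is_RInt g a b l ->
  (forall t, a < t < b -> g t <= f t) -> l <= RInt f a b.
Proof.
  intros Hab Hf Hg Hle. rewrite <- (is_RInt_unique g a b l Hg).
  apply RInt_le; [assumption | now exists l | assumption | assumption].
Qed.

Lemma is_RInt_Rpower a b q : 0 < a <= b -> q <> 0 ->
  is_RInt (fun t => Rpower t (q - 1)) a b ((Rpower b q - Rpower a q) / q).
Proof.
  intros Hab Hq.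
  replace ((Rpower b q - Rpower a q) / q) with
    (minus ((fun x => Rpower x q / q) b) ((fun x => Rpower x q / q) a))
    by (unfold minus, plus, opp; simpl; field; exact Hq).
  apply (@is_RInt_derive R_CompleteNormedModule (fun x => Rpower x q / q));
    rewrite Rmin_left, Rmax_right by lra; intros x Hx.
  - apply is_derive_Reals.
    replace (Rpower x (q - 1)) with (q * Rpower x (q - 1) * / q) by (field; exact Hq).
    apply derivable_pt_lim_scal_right, derivable_pt_lim_power. lra.
  - apply (@ex_derive_continuous R_AbsRing R_NormedModule).
    exists ((q - 1) * Rpower x (q - 1 - 1)).
    apply is_derive_Reals, derivable_pt_lim_power. lra.
Qed.

Lemma is_RInt_Rinv a b : 0 < a <= b -> is_RInt Rinv a b (ln b - ln a).
Proof.
  intros Hab. apply (@is_RInt_derive R_CompleteNormedModule ln);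
    rewrite Rmin_left, Rmax_right by lra; intros x Hx.
  - apply is_derive_ln. lra.
  - apply (@ex_derive_continuous R_AbsRing R_NormedModule). auto_derive. lra.
Qed.

Section Integrand.

Variables alpha u : R.
Hypothesis alpha_gt0 : 0 < alpha.
Hypothesis u_ge0 : 0 <= u.

Lemma integrand_ge0 t : 0 <= t -> 0 <= integrand alpha u t.
Proof.
  intros Ht. unfold integrand. destruct (Req_dec t 0) as [Ht0|Ht0].
  - subst t. replace (0 ^ 2 * _) with 0 by ring. rewrite Rdiv_0_r. lra.
  - pose proof (denom_pos u t u_ge0 ltac:(lra)).
    apply Rdiv_le_0_compat; [apply ncount_ge0 | apply Rmult_lt_0_compat; nra].
Qed.

Lemma ex_RInt_integrand_step k :
  ex_RInt (integrand alpha u) (tseq alpha k) (tseq alpha (S k)).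
Proof.
  pose proof (tseq_le_S alpha alpha_gt0 k) as Hk.
  apply (ex_RInt_ext (fun t => INR k / (t ^ 2 * (t ^ 2 + u ^ 2 + u * t * sqrt 2)))).
  - rewrite Rmin_left, Rmax_right by exact Hk. intros t Ht. unfold integrand.
    pose proof (tseq_ge0 alpha k).
    rewrite (ncount_tseq alpha alpha_gt0 k t); lra.
  - destruct k as [|k].
    + apply (ex_RInt_ext (fun _ => 0)); [intros; simpl; unfold Rdiv; ring | apply ex_RInt_const].
    + apply (@ex_RInt_continuous R_CompleteNormedModule).
      rewrite Rmin_left, Rmax_right by exact Hk. intros t Ht.
      pose proof (tseq_ge1 alpha alpha_gt0 (S k) ltac:(lia)).
      pose proof (denom_pos u t u_ge0 ltac:(lra)).
      apply (@ex_derive_continuous R_AbsRing R_NormedModule). auto_derive.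
      simpl in *. apply Rgt_not_eq, Rmult_lt_0_compat; nra.
Qed.

Lemma ex_RInt_integrand M : ex_RInt (integrand alpha u) 0 (tseq alpha M).
Proof.
  induction M as [|M IH].
  - rewrite tseq_0. apply ex_RInt_point.
  - apply (ex_RInt_Chasles _ _ (tseq alpha M)); [exact IH | apply ex_RInt_integrand_step].
Qed.

Lemma ex_RInt_integrand_sub M a b :
  0 <= a -> a <= b -> b <= tseq alpha M -> ex_RInt (integrand alpha u) a b.
Proof. intros. apply (ex_RInt_subinterval _ 0 (tseq alpha M)); auto using ex_RInt_integrand. Qed.

Lemma IM_ge_RInt M a b :
  0 <= a -> a <= b -> b <= tseq alpha M -> u ^ 3 * RInt (integrand alpha u) a b <= IM alpha M u.
Proof.
  intros. rewrite IM_integrand. apply Rmult_le_compat_l; [apply pow_le; lra|].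
  apply RInt_subinterval_le; auto using ex_RInt_integrand.
  intros t Ht. apply integrand_ge0. lra.
Qed.

Lemma integrand_ge t m :
  1 <= t <= m -> u <= m -> Rpower t (1 / alpha) / (8 * t ^ 2 * m ^ 2) <= integrand alpha u t.
Proof.
  intros Ht Hm. unfold integrand.
  pose proof (ncount_ge_half alpha alpha_gt0 t ltac:(lra)).
  pose proof (denom_pos u t u_ge0 ltac:(lra)).
  pose proof (denom_le_sqr u t u_ge0 ltac:(lra)).
  assert (0 < t ^ 2) by (apply pow_lt; lra).
  assert ((t + u) ^ 2 <= 4 * m ^ 2) by (simpl; nra).
  replace (Rpower t (1 / alpha) / (8 * t ^ 2 * m ^ 2))
    with (Rpower t (1 / alpha) / 2 * / (t ^ 2 * (4 * m ^ 2))) by (field; nra).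
  unfold Rdiv at 2. apply Rmult_le_compat; [| | assumption |].
  - left. apply Rdiv_lt_0_compat; [apply exp_pos | lra].
  - left. apply Rinv_0_lt_compat. nra.
  - apply Rinv_le_contravar; [nra|]. apply Rmult_le_compat_l; lra.
Qed.

Lemma RInt_integrand_inner_ge M a b :
  alpha <> 1 -> 1 <= a -> a <= b -> b <= u -> b <= tseq alpha M ->
  alpha * (Rpower b (1 / alpha - 1) - Rpower a (1 / alpha - 1)) / (8 * (1 - alpha) * u ^ 2)
  <= RInt (integrand alpha u) a b.
Proof.
  intros Ha1 Ha Hab Hbu HbM.
  assert (Hq : 1 / alpha - 1 <> 0).
  { assert (alpha * (1 / alpha) = 1) by (field; lra). intro. apply Ha1. nra. }
  apply (is_RInt_le_RInt _ (fun t => / (8 * u ^ 2) * Rpower t (1 / alpha - 1 - 1)) a b).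
  - exact Hab.
  - apply (ex_RInt_integrand_sub M); lra.
  - replace (alpha * _ / _) with
      (/ (8 * u ^ 2) * ((Rpower b (1 / alpha - 1) - Rpower a (1 / alpha - 1)) / (1 / alpha - 1)))
      by (field; repeat split; lra).
    exact (is_RInt_scal _ _ _ _ _ (is_RInt_Rpower a b _ ltac:(lra) Hq)).
  - intros t Ht. eapply Rle_trans; [|apply (integrand_ge t u); lra].
    replace (1 / alpha - 1 - 1) with (1 / alpha - INR 2) by (simpl; ring).
    rewrite Rpower_minus_nat by lra. right. field. lra.
Qed.

Lemma RInt_integrand_outer_ge M a b :
  alpha <> 1 / 3 -> 1 <= a -> u <= a -> a <= b -> b <= tseq alpha M ->
  alpha * (Rpower b (1 / alpha - 3) - Rpower a (1 / alpha - 3)) / (8 * (1 - 3 * alpha))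
  <= RInt (integrand alpha u) a b.
Proof.
  intros Ha3 Ha Hua Hab HbM.
  assert (Hq : 1 / alpha - 3 <> 0).
  { assert (alpha * (1 / alpha) = 1) by (field; lra). intro. apply Ha3. nra. }
  apply (is_RInt_le_RInt _ (fun t => / 8 * Rpower t (1 / alpha - 3 - 1)) a b).
  - exact Hab.
  - apply (ex_RInt_integrand_sub M); lra.
  - replace (alpha * _ / _) with
      (/ 8 * ((Rpower b (1 / alpha - 3) - Rpower a (1 / alpha - 3)) / (1 / alpha - 3)))
      by (field; repeat split; lra).
    exact (is_RInt_scal _ _ _ _ _ (is_RInt_Rpower a b _ ltac:(lra) Hq)).
  - intros t Ht. eapply Rle_trans; [|apply (integrand_ge t t); lra].
    replace (1 / alpha - 3 - 1) with (1 / alpha - INR 4) by (simpl; ring).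
    rewrite Rpower_minus_nat by lra. right. field. lra.
Qed.

End Integrand.

Lemma RInt_integrand_outer_log_ge u M a b :
  0 <= u -> 1 <= a -> u <= a -> a <= b -> b <= tseq (1 / 3) M ->
  (ln b - ln a) / 8 <= RInt (integrand (1 / 3) u) a b.
Proof.
  intros Hu Ha Hua Hab HbM.
  apply (is_RInt_le_RInt _ (fun t => / 8 * / t) a b).
  - exact Hab.
  - apply (ex_RInt_integrand_sub (1 / 3) u ltac:(lra) Hu M); lra.
  - replace ((ln b - ln a) / 8) with (/ 8 * (ln b - ln a)) by field.
    exact (is_RInt_scal _ _ _ _ _ (is_RInt_Rinv a b ltac:(lra))).
  - intros t Ht. eapply Rle_trans; [|apply (integrand_ge (1 / 3) u ltac:(lra) Hu t t); lra].
    replace (1 / (1 / 3)) with (INR 3) by (simpl; field).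
    rewrite Rpower_pow by lra. right. field. lra.
Qed.

Lemma RInt_integrand_head_ge alpha M u :
  0 < alpha < 1 -> 0 <= u -> Rmax u 1 <= tseq alpha M ->
  alpha / 8 * ((rpow u (1 / alpha) - u) / (1 - alpha))
  <= u ^ 3 * RInt (integrand alpha u) 1 (Rmax u 1).
Proof.
  intros Ha Hu HmT.
  assert (Hinv : 1 <= 1 / alpha) by (apply (Rmult_le_reg_l alpha); [lra | field_simplify; lra]).
  destruct (Rle_lt_dec u 1) as [Hu1|Hu1].
  - rewrite Rmax_right, RInt_point by exact Hu1.
    pose proof (rpow_le_self u (1 / alpha) ltac:(lra) Hinv).
    change (@zero R_CompleteNormedModule) with 0. rewrite Rmult_0_r.
    apply Rmult_le_0_l; [lra|]. unfold Rdiv.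
    apply Rmult_le_0_r; [lra | left; apply Rinv_0_lt_compat; lra].
  - rewrite Rmax_left in * by lra. rewrite rpow_Rpower by lra.
    pose proof (RInt_integrand_inner_ge alpha u ltac:(lra) Hu M 1 u
                  ltac:(lra) (Rle_refl 1) ltac:(lra) (Rle_refl u) HmT) as Hbound.
    rewrite Rpower_1_l in Hbound.
    replace (1 / alpha - 1) with (1 / alpha - INR 1) in Hbound by (simpl; ring).
    rewrite Rpower_minus_nat in Hbound by lra.
    eapply Rle_trans; [|apply Rmult_le_compat_l; [apply pow_le; lra | exact Hbound]].
    right. field. lra.
Qed.

Lemma IM_lower_bound_large_u alpha M u :
  0 < alpha <= 1 / 3 -> (1 <= M)%nat -> tseq alpha M <= u ->
  IM alpha M u >= alpha / (8 * (1 - alpha)) * u * (rpow (INR M) (1 - alpha) - 1).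
Proof.
  intros Ha HM Hu.
  pose proof (tseq_ge1 alpha ltac:(lra) M HM) as HT.
  pose proof (IM_ge_RInt alpha u ltac:(lra) ltac:(lra) M 1 (tseq alpha M)
                ltac:(lra) HT (Rle_refl _)) as HIM.
  pose proof (RInt_integrand_inner_ge alpha u ltac:(lra) ltac:(lra) M 1 (tseq alpha M)
                ltac:(lra) (Rle_refl 1) HT Hu (Rle_refl _)) as Hbound.
  rewrite Rpower_1_l, Rpower_tseq in Hbound by (lra || exact HM).
  replace (alpha * (1 / alpha - 1)) with (1 - alpha) in Hbound by (field; lra).
  rewrite rpow_Rpower by (apply (lt_INR 0); lia).
  apply Rle_ge, (Rle_trans _ (u ^ 3 * RInt (integrand alpha u) 1 (tseq alpha M))); [|exact HIM].
  eapply Rle_trans; [|apply Rmult_le_compat_l; [apply pow_le; lra | exact Hbound]].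
  right. field. lra.
Qed.

Lemma IM_lower_bound_small_u alpha M u :
  0 < alpha < 1 / 3 -> (1 <= M)%nat -> 0 <= u -> u <= tseq alpha M ->
  IM alpha M u >=
    alpha / 8 * ((rpow u (1 / alpha) - u) / (1 - alpha)
                 + u ^ 3 * (rpow (INR M) (1 - 3 * alpha)
                            - rpow (Rmax u 1) (1 / alpha - 3)) / (1 - 3 * alpha)).
Proof.
  intros Ha HM Hu HuT.
  pose proof (tseq_ge1 alpha ltac:(lra) M HM) as HT.
  assert (Hm : 1 <= Rmax u 1 /\ u <= Rmax u 1 /\ Rmax u 1 <= tseq alpha M)
    by (split; [apply Rmax_r | split; [apply Rmax_l | apply Rmax_lub; lra]]).
  pose proof (RInt_integrand_head_ge alpha M u ltac:(lra) Hu ltac:(apply Hm)) as Hhead.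
  pose proof (RInt_integrand_outer_ge alpha u ltac:(lra) Hu M (Rmax u 1) (tseq alpha M)
                ltac:(lra) ltac:(lra) ltac:(lra) ltac:(lra) (Rle_refl _)) as Htail.
  rewrite Rpower_tseq in Htail by (lra || exact HM).
  replace (alpha * (1 / alpha - 3)) with (1 - 3 * alpha) in Htail by (field; lra).
  pose proof (IM_ge_RInt alpha u ltac:(lra) Hu M 1 (tseq alpha M)
                ltac:(lra) HT (Rle_refl _)) as HIM.
  assert (Hsplit : RInt (integrand alpha u) 1 (Rmax u 1)
                   + RInt (integrand alpha u) (Rmax u 1) (tseq alpha M)
                   = RInt (integrand alpha u) 1 (tseq alpha M))
    by (apply (@RInt_Chasles R_CompleteNormedModule);
        apply (ex_RInt_integrand_sub alpha u ltac:(lra) Hu M); lra).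
  rewrite <- Hsplit, Rmult_plus_distr_l in HIM.
  rewrite (rpow_Rpower (INR M)), (rpow_Rpower (Rmax u 1))
    by (lra || (apply (lt_INR 0); lia)).
  apply (Rmult_le_compat_l (u ^ 3)) in Htail; [|apply pow_le; lra].
  replace (u ^ 3 * _) with
    (alpha / 8 * (u ^ 3 * (Rpower (INR M) (1 - 3 * alpha) - Rpower (Rmax u 1) (1 / alpha - 3))
                  / (1 - 3 * alpha))) in Htail by (field; lra).
  lra.
Qed.

Lemma IM_lower_bound_critical M u :
  (1 <= M)%nat -> 0 <= u -> u <= tseq (1 / 3) M ->
  IM (1 / 3) M u >= 1 / 8 * u ^ 3 * ln (tseq (1 / 3) M / Rmax u 1).
Proof.
  intros HM Hu HuT.
  pose proof (tseq_ge1 (1 / 3) ltac:(lra) M HM) as HT.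
  assert (Hm : 1 <= Rmax u 1 /\ u <= Rmax u 1 /\ Rmax u 1 <= tseq (1 / 3) M)
    by (split; [apply Rmax_r | split; [apply Rmax_l | apply Rmax_lub; lra]]).
  pose proof (RInt_integrand_outer_log_ge u M (Rmax u 1) (tseq (1 / 3) M) Hu
                ltac:(lra) ltac:(lra) ltac:(lra) (Rle_refl _)) as Htail.
  pose proof (IM_ge_RInt (1 / 3) u ltac:(lra) Hu M (Rmax u 1) (tseq (1 / 3) M)
                ltac:(lra) ltac:(lra) (Rle_refl _)).
  apply (Rmult_le_compat_l (u ^ 3)) in Htail; [|apply pow_le; lra].
  rewrite ln_div by lra. lra.
Qed.

Theorem lemma2p2 :
  (forall alpha : R, 0 < alpha <= 1 / 3 ->
     exists C : R, 0 < C /\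
       forall (M : nat) (u : R), (1 <= M)%nat -> tseq alpha M <= u ->
         IM alpha M u >= C * u * (rpow (INR M) (1 - alpha) - 1)) /\
  (forall alpha : R, 0 < alpha < 1 / 3 ->
     exists C : R, 0 < C /\
       forall (M : nat) (u : R), (1 <= M)%nat -> 0 <= u -> u <= tseq alpha M ->
         IM alpha M u >=
           C * ((rpow u (1 / alpha) - u) / (1 - alpha)
                + u ^ 3 * (rpow (INR M) (1 - 3 * alpha)
                           - rpow (Rmax u 1) (1 / alpha - 3)) / (1 - 3 * alpha))) /\
  (exists C : R, 0 < C /\
     forall (M : nat) (u : R), (1 <= M)%nat -> 0 <= u -> u <= tseq (1 / 3) M ->
       IM (1 / 3) M u >= C * u ^ 3 * ln (tseq (1 / 3) M / Rmax u 1)).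
Proof.
  split; [|split].
  - intros alpha Ha. exists (alpha / (8 * (1 - alpha))).
    split; [apply Rdiv_lt_0_compat; lra|].
    intros M u. apply IM_lower_bound_large_u, Ha.
  - intros alpha Ha. exists (alpha / 8). split; [lra|].
    intros M u. apply IM_lower_bound_small_u, Ha.
  - exists (1 / 8). split; [lra|]. exact IM_lower_bound_critical.
Qed.
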